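(* Let $k\ge 1$ and $n$ be integers, and let $H$ be the $k\times k$ complex matrix whose $i$-th row ($1\le i\le k$) is $v((n+k+i-1)_{k+1})-v((n+k+i-1)_{k})$. Then the nullity of $H$ equals the number of cycles (loops included) in the directed graph $G(n,k)$.
   Context: For an integer $\ell$, $\ell_k$ and $\ell_{k+1}$ denote the least nonnegative residues of $\ell$ modulo $k$ and $k+1$. Let $\xi$ be a complex primitive $(k+1)$-th root of unity and $v(\ell)=(\xi^{\ell},\xi^{2\ell},\dots,\xi^{k\ell})\in\mathbb{C}^k$. $G(n,k)$ is the directed graph on vertices $0,1,\dots,k$ whose edges are exactly the $k$ edges $E(i): (i+n-2)_{k+1}\to(i+n-1)_k$, $1\le i\le k$; equivalently $a\to b$ is an edge iff $v(a)-v(b)$ is a row of $H$. An edge $a\to a$ is a loop and counts as a cycle of length $1$. In the paper the nullity of $H$ equals $N(n,k)$, where for $n>k$, $N(n,k)$ is the nullity of the $n\times n$ skew-symmetric Toeplitz matrix $A(n,k)$ whose first $k$ superdiagonals have all entries $1$ and remaining superdiagonals all entries $0$. *)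

From mathcomp Require Import all_boot all_order all_algebra all_field.
Set Implicit Arguments. Unset Strict Implicit. Unset Printing Implicit Defensive.
Import GRing.Theory Num.Theory.
Local Open Scope ring_scope.

Definition resid (l : int) (m : nat) : nat := `|(l %% (m%:Z))%Z|%N.

(* v(l) = (xi^l, xi^(2l), ..., xi^(kl)); component j : 'I_k is xi^((j+1) l) *)
Definition vvec (k : nat) (xi : algC) (l : nat) (j : 'I_k) : algC :=
  xi ^+ (j.+1 * l)%N.

(* H : row i (1 <= i <= k, here i = i'+1 with i' : 'I_k) is
   v((n+k+i-1)_{k+1}) - v((n+k+i-1)_k) *)
Definition Hmx (n : int) (k : nat) (xi : algC) : 'M[algC]_k :=
  \matrix_(i < k, j < k)
     (vvec xi (resid (n + k%:Z + i%:Z) k.+1) j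
      - vvec xi (resid (n + k%:Z + i%:Z) k) j).

Definition nullity (k : nat) (A : 'M[algC]_k) : nat := (k - \rank A)%N.

(* Graph G(n,k): vertices 0..k (nat), edges E(i), i = i'+1 with i' : 'I_k,
   E(i) : (i+n-2)_{k+1} -> (i+n-1)_k *)
Definition etail (n : int) (k : nat) (i : 'I_k) : nat :=
  resid (i.+1%:Z + n - 2) k.+1.
Definition ehead (n : int) (k : nat) (i : 'I_k) : nat :=
  resid (i.+1%:Z + n - 1) k.

Definition cycle_seq (n : int) (k : nat) (s : seq 'I_k) : bool :=
  [&& s != [::], uniq s, uniq (map (@etail n k) s)
    & cycle (fun e f => @ehead n k e == @etail n k f) s].

(* A directed cycle of G(n,k) is identified with its (nonempty) edge set T:
   T is a cycle iff its edges can be arranged as such a cyclic sequence.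
   (Such sequences have length <= k, whence the bounded quantification.) *)
Definition is_dcycle (n : int) (k : nat) (T : {set 'I_k}) : bool :=
  [exists m : 'I_k.+1, exists t : m.-tuple 'I_k,
     @cycle_seq n k (val t) && (T == [set x in val t])].

Definition num_cycles (n : int) (k : nat) : nat :=
  #|[set T : {set 'I_k} | @is_dcycle n k T]|.

From mathcomp Require Import all_boot all_order all_algebra all_field zify.
Set Implicit Arguments. Unset Strict Implicit. Unset Printing Implicit Defensive.
Import GRing.Theory Num.Theory.
Local Open Scope ring_scope.

(* Row i of H is v(t_i) - v(h_i), where t_i -> h_i is the edge E(i) of G(n,k).
   Hence a row vector u is in the left kernel of H iff the net outflows
   w(a) = sum_(t_i = a) u_i - sum_(h_i = a) u_i satisfy sum_a w(a) xi^(c a) = 0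
   for c = 1..k; this also holds for c = 0, so invertibility of the discrete
   Fourier transform of order k+1 gives w = 0: u is a circulation on G(n,k).
   Tails and heads are both injective, so every vertex has in- and out-degree
   at most one: G(n,k) is a disjoint union of paths and cycles, and its
   circulations are the linear combinations of the indicator vectors of its
   cycles, which have pairwise disjoint supports. *)

Lemma resid_lt (l : int) (m : nat) : (0 < m)%N -> (resid l m < m)%N.
Proof. by rewrite /resid; lia. Qed.

Lemma residDr (l : int) (m : nat) : resid (l + m%:Z) m = resid l m.
Proof. by rewrite /resid modzDr. Qed.

Lemma resid_addr_inj (l : int) (m i j : nat) : (i < m)%N -> (j < m)%N ->
  resid (l + i%:Z) m = resid (l + j%:Z) m -> i = j.
Proof.
rewrite /resid => im jm eq_resid.
have m0 : m%:Z != 0 by lia.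
have /eqP : ((l + i%:Z) %% m%:Z = (l + j%:Z) %% m%:Z)%Z.
  by have := modz_ge0 (l + i%:Z) m0; have := modz_ge0 (l + j%:Z) m0; lia.
by rewrite eqz_modDl !modz_small; [move/eqP => [] | lia..].
Qed.

Lemma big_fiber_inj (V : nmodType) (I : finType) (T : eqType) (g : I -> T)
    (F : I -> V) (i0 : I) (a : T) :
  injective g -> g i0 = a -> \sum_(i | g i == a) F i = F i0.
Proof. by move=> g_inj <-; rewrite (big_pred1 i0) // => i /=; rewrite (inj_eq g_inj). Qed.

Lemma sum_indicator_fiber (R : pzSemiRingType) (I : finType) (T : eqType)
    (g : I -> T) (P : pred I) (a : T) :
  injective g -> \sum_(i | g i == a) ((P i)%:R : R) = [exists i, P i && (g i == a)]%:R.
Proof.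
move=> g_inj; case: (pickP (fun i => g i == a)) => [i0 /eqP gi0 | no_fiber].
  rewrite (big_fiber_inj _ g_inj gi0); congr (nat_of_bool _)%:R.
  apply/idP/existsP => [Pi0 | [i]].
    by exists i0; rewrite Pi0 gi0 eqxx.
  by case/andP => Pi /eqP; rewrite -gi0 => /g_inj <-.
rewrite big_pred0 //; case: existsP => // [[i /andP [_]]].
by rewrite no_fiber.
Qed.

Lemma sum_by_fibers (R : pzSemiRingType) (I : finType) (M : nat) (g : I -> nat)
    (F : I -> R) (G : nat -> R) :
  (forall i, g i < M)%N ->
  \sum_i F i * G (g i) = \sum_(a < M) (\sum_(i | g i == a) F i) * G a.
Proof.
move=> gM; under [RHS]eq_bigr => a _ do rewrite mulr_suml big_mkcond /=.
rewrite exchange_big /=; apply: eq_bigr => i _.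
rewrite (bigD1 (Ordinal (gM i))) //= eqxx big1 ?addr0 //.
by move=> a /negbTE; rewrite -val_eqE /= eq_sym => ->.
Qed.

Section PrimitiveRootSums.
Variables (R : numDomainType) (m : nat) (z : R).
Hypothesis z_prim : m.-primitive_root z.

Lemma sum_prim_root_powers d :
  \sum_(c < m) (z ^+ d) ^+ c = if (m %| d)%N then m%:R else 0.
Proof.
rewrite (prim_order_dvd z_prim); case: eqP => [-> | /eqP zd_neq1].
  by rewrite (eq_bigr (fun _ => 1)) ?sumr_const ?card_ord // => c _; rewrite expr1n.
have : (z ^+ d) ^+ m - 1 = 0.
  by rewrite -exprM mulnC exprM (prim_expr_order z_prim) expr1n subrr.
by rewrite subrX1 => /eqP; rewrite mulf_eq0 subr_eq0 (negbTE zd_neq1) => /eqP.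
Qed.

(* Inversion of the discrete Fourier transform: multiply the c-th equation by
   z^(c (m - b)) and sum over c. *)
Lemma dft_eq0 (W : nat -> R) :
  (forall c, (c < m)%N -> \sum_(a < m) W a * z ^+ (c * a) = 0) ->
  forall b, (b < m)%N -> W b = 0.
Proof.
move=> dftW b bm.
have dvd_shift a : (a < m)%N -> (m %| a + (m - b))%N = (a == b).
  move=> am; case: eqP => [-> | ab]; first by rewrite subnKC ?dvdnn // ltnW.
  by apply/negP => /dvdnP [[|[|q]] /=]; lia.
have : \sum_(c < m) z ^+ (c * (m - b)) * \sum_(a < m) W a * z ^+ (c * a) = 0.
  by rewrite big1 // => c _; rewrite dftW ?mulr0.
under eq_bigr => c _ do rewrite mulr_sumr.
rewrite exchange_big /=.
under eq_bigr => a _.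
  under eq_bigr => c _ do rewrite mulrCA -exprD -mulnDr mulnC exprM.
  rewrite -mulr_sumr sum_prim_root_powers addnC dvd_shift //.
  over.
rewrite (bigD1 (Ordinal bm)) //= eqxx big1 ?addr0.
  move/eqP; rewrite mulf_eq0 pnatr_eq0 => /orP [/eqP // | /eqP m0].
  by move: bm; rewrite m0.
by move=> a /negbTE; rewrite -val_eqE /= => ->; rewrite mulr0.
Qed.

End PrimitiveRootSums.

Lemma path_invariant (T : eqType) (r : rel T) (P : T -> Prop) (x : T) (p : seq T) :
  (forall y z, r y z -> P y -> P z) -> path r x p -> P x -> forall y, y \in p -> P y.
Proof.
move=> rP; elim: p x => //= z p IHp x /andP [rxz pzp] Px y.
rewrite in_cons => /orP [/eqP -> | yp]; first exact: rP rxz Px.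
exact: IHp pzp (rP _ _ rxz Px) y yp.
Qed.

Lemma cycle_invariant (T : eqType) (r : rel T) (P : T -> Prop) (s : seq T) (a : T) :
  (forall y z, r y z -> P y -> P z) -> cycle r s -> a \in s -> P a ->
  forall b, b \in s -> P b.
Proof.
move=> rP cyc_s a_s Pa b; case: (rot_to a_s) => i s' rot_s.
have /= path_s' : cycle r (a :: s') by rewrite -rot_s rot_cycle.
rewrite -(mem_rot i) rot_s in_cons => /orP [/eqP -> // | b_s'].
by apply: (path_invariant rP path_s' Pa); rewrite mem_rcons in_cons b_s' orbT.
Qed.

Section Graph.
Variables (n : int) (k : nat).
Implicit Types (i j e : 'I_k) (y : 'I_k -> algC) (s : seq 'I_k) (T : {set 'I_k}).

Lemma etail_lt i : (etail n i < k.+1)%N.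
Proof. exact: resid_lt. Qed.

Lemma ehead_lt i : (ehead n i < k)%N.
Proof. by apply: resid_lt; case: i; lia. Qed.

Lemma etail_inj : injective (@etail n k).
Proof.
move=> i j; have shift (l : 'I_k) : l.+1%:Z + n - 2 = (n - 1) + l%:Z by lia.
rewrite /etail !shift => /resid_addr_inj eq_ij; apply/val_inj/eq_ij; exact: leqW.
Qed.

Lemma ehead_inj : injective (@ehead n k).
Proof.
move=> i j; have shift (l : 'I_k) : l.+1%:Z + n - 1 = n + l%:Z by lia.
rewrite /ehead !shift => /resid_addr_inj eq_ij; exact/val_inj/eq_ij.
Qed.

Lemma Hmx_entry (xi : algC) i j :
  Hmx n k xi i j = xi ^+ (j.+1 * etail n i) - xi ^+ (j.+1 * ehead n i).
Proof.
rewrite /Hmx mxE /vvec /etail /ehead.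
have -> : n + k%:Z + i%:Z = (i.+1%:Z + n - 2) + k.+1%:Z by lia.
rewrite residDr.
have -> : (i.+1%:Z + n - 2) + k.+1%:Z = (i.+1%:Z + n - 1) + k%:Z by lia.
by rewrite residDr.
Qed.

Definition net_outflow y (a : nat) : algC :=
  \sum_(i | etail n i == a) y i - \sum_(i | ehead n i == a) y i.

Definition circulation y : Prop := forall a, net_outflow y a = 0.

Lemma sum_edge_powers (xi : algC) y c :
  \sum_i y i * (xi ^+ (c * etail n i) - xi ^+ (c * ehead n i))
  = \sum_(a < k.+1) net_outflow y a * xi ^+ (c * a).
Proof.
under eq_bigr => i _ do rewrite mulrBr.
have ehead_ltS i : (ehead n i < k.+1)%N by apply: ltnW; apply: ehead_lt.
rewrite sumrB (sum_by_fibers _ (fun a => xi ^+ (c * a)) etail_lt).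
rewrite (sum_by_fibers _ (fun a => xi ^+ (c * a)) ehead_ltS) -sumrB.
by apply: eq_bigr => a _; rewrite mulrBl.
Qed.

Lemma Hmx_left_ker (xi : algC) y : (k.+1).-primitive_root xi ->
  (\row_i y i) *m Hmx n k xi = 0 <-> circulation y.
Proof.
move=> xi_prim; split => [uH0 a | cu]; last first.
  apply/rowP => j; rewrite !mxE; under eq_bigr => i _ do rewrite mxE Hmx_entry.
  by rewrite sum_edge_powers big1 // => a _; rewrite cu mul0r.
have [ak | ka] := ltnP a k.+1; last first.
  rewrite /net_outflow !big_pred0 ?subrr // => i; apply/negbTE/eqP => eq_a;
    by have := etail_lt i; have := ehead_lt i; lia.
apply: (dft_eq0 xi_prim) ak => -[_ | c ck]; rewrite -sum_edge_powers.
  by rewrite big1 // => i _; rewrite !mul0n subrr mulr0.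
rewrite ltnS in ck.
have := congr1 (fun M : 'rV_k => M 0 (Ordinal ck)) uH0; rewrite !mxE => col_c.
by rewrite -[RHS]col_c; apply: eq_bigr => i _; rewrite mxE Hmx_entry.
Qed.

Lemma circulation_step y i j :
  circulation y -> ehead n i = etail n j -> y i = y j.
Proof.
move=> cy ij; have := cy (ehead n i); rewrite /net_outflow.
rewrite (big_fiber_inj _ etail_inj (esym ij)) (big_fiber_inj _ ehead_inj (erefl _)).
by move/eqP; rewrite subr_eq0 => /eqP.
Qed.

Lemma is_dcycleP T : is_dcycle n T <-> exists2 s, cycle_seq n s & T = [set x in s].
Proof.
split=> [/existsP [m /existsP [t /andP [cyc_t /eqP ->]]] | [s cyc_s ->]].
  by exists (val t).
have s_small : (size s < k.+1)%N.
  case/and4P: cyc_s => _ /card_uniqP <- _ _.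
  by rewrite ltnS -[X in (_ <= X)%N](card_ord k) max_card.
apply/existsP; exists (Ordinal s_small).
by apply/existsP; exists (in_tuple s); rewrite cyc_s /=.
Qed.

Lemma dcycle_edge T : is_dcycle n T -> exists e, e \in T.
Proof.
by case/is_dcycleP => -[|e s] /and4P [//= _ _ _ _ ->]; exists e; rewrite inE mem_head.
Qed.

Lemma cycle_seq_closed s i j :
  cycle_seq n s -> i \in s -> ehead n i = etail n j -> j \in s.
Proof.
case/and4P => _ _ _ cyc_s i_s ij; move/eqP: (next_cycle cyc_s i_s).
by rewrite ij => /etail_inj ->; rewrite mem_next.
Qed.

Lemma dcycle_eq T1 T2 e :
  is_dcycle n T1 -> is_dcycle n T2 -> e \in T1 -> e \in T2 -> T1 = T2.
Proof.
have sub s1 s2 :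
    cycle_seq n s1 -> cycle_seq n s2 -> e \in s1 -> e \in s2 -> {subset s1 <= s2}.
  move=> /and4P [_ _ _ cyc1] cyc2 e_s1 e_s2.
  apply: (cycle_invariant (P := fun x => x \in s2) _ cyc1 e_s1 e_s2) => x y /eqP xy x_s2.
  exact: cycle_seq_closed cyc2 x_s2 xy.
case/is_dcycleP => s1 cyc1 ->; case/is_dcycleP => s2 cyc2 ->; rewrite !inE => e_s1 e_s2.
by apply/setP => x; rewrite !inE; apply/idP/idP; apply: sub.
Qed.

Lemma circulation_dcycle_const y T i j :
  circulation y -> is_dcycle n T -> i \in T -> j \in T -> y i = y j.
Proof.
move=> cy /is_dcycleP [s /and4P [_ _ _ cyc_s] ->]; rewrite !inE => i_s.
apply: (cycle_invariant (P := fun x => y i = y x) _ cyc_s i_s) => // x z /eqP xz ->.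
exact: circulation_step cy xz.
Qed.

Lemma dcycle_indicator_circulation T :
  is_dcycle n T -> circulation (fun i => (i \in T)%:R).
Proof.
case/is_dcycleP => s /and4P [_ _ _ cyc_s] -> a; rewrite /net_outflow.
rewrite (sum_indicator_fiber _ _ _ etail_inj) (sum_indicator_fiber _ _ _ ehead_inj).
apply/eqP; rewrite subr_eq0; apply/eqP; congr (nat_of_bool _)%:R.
apply/existsP/existsP => -[i /andP []]; rewrite inE => i_s /eqP <-.
  exists (prev s i); rewrite inE mem_prev i_s; exact: prev_cycle cyc_s i_s.
by exists (next s i); rewrite inE mem_next i_s eq_sym; exact: next_cycle cyc_s i_s.
Qed.

Definition succ_edge i : 'I_k := odflt i [pick j | etail n j == ehead n i].

Lemma succ_edge_tail y i :
  circulation y -> y i != 0 -> etail n (succ_edge i) = ehead n i.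
Proof.
move=> cy yi; rewrite /succ_edge; case: pickP => [j /eqP // | no_succ].
have := cy (ehead n i); rewrite /net_outflow big_pred0 //.
rewrite (big_fiber_inj _ ehead_inj (erefl _)) sub0r => /eqP.
by rewrite oppr_eq0 (negbTE yi).
Qed.

Lemma orbit_succ_edge_cycle_seq y e :
  circulation y -> y e != 0 -> cycle_seq n (orbit succ_edge e).
Proof.
move=> cy ye; pose S := [pred i | y i != 0].
have succ_S : {homo succ_edge : i / i \in S}.
  move=> i; rewrite !inE => yi.
  by rewrite -(circulation_step cy (esym (succ_edge_tail cy yi))).
have succ_inj : {in S &, injective succ_edge}.
  move=> i j yi yj eq_succ; apply: ehead_inj.
  by rewrite -(succ_edge_tail cy yi) -(succ_edge_tail cy yj) eq_succ.
have orbit_S : all (mem S) (orbit succ_edge e).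
  by apply/allP => x /trajectP [m _ ->]; exact: iter_in.
apply/and4P; split; rewrite ?(map_inj_uniq etail_inj) ?orbit_uniq //.
  by apply/eqP => orbit0; have := in_orbit succ_edge e; rewrite orbit0.
rewrite (eq_in_cycle (e' := frel succ_edge) _ orbit_S).
  exact: (cycle_orbit_in succ_S succ_inj ye).
by move=> x z x_S _ /=; rewrite -(succ_edge_tail cy x_S) (inj_eq etail_inj).
Qed.

Lemma circulation_support_dcycle y e :
  circulation y -> y e != 0 -> exists2 T, is_dcycle n T & e \in T.
Proof.
move=> cy ye; exists [set x in orbit succ_edge e]; last by rewrite inE in_orbit.
by apply/is_dcycleP; exists (orbit succ_edge e) => //; exact: orbit_succ_edge_cycle_seq.
Qed.

Definition dcycles : {set {set 'I_k}} := [set T | is_dcycle n T].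

Definition dcycle_value y T : algC := if [pick i in T] is Some i then y i else 0.

Lemma dcycle_value_eq y T i :
  circulation y -> is_dcycle n T -> i \in T -> dcycle_value y T = y i.
Proof.
move=> cy dT iT; rewrite /dcycle_value; case: pickP => [j jT | /(_ i)].
  exact: circulation_dcycle_const cy dT jT iT.
by rewrite iT.
Qed.

Lemma circulation_decomposition y j : circulation y ->
  y j = \sum_(T in dcycles) dcycle_value y T * (j \in T)%:R.
Proof.
move=> cy; case: (eqVneq (y j) 0) => [yj0 | yj].
  rewrite yj0 big1 // => T; rewrite inE => dT.
  have [jT | _] := boolP (j \in T); last by rewrite mulr0.
  by rewrite (dcycle_value_eq cy dT jT) yj0 mul0r.
have [T0 dT0 jT0] := circulation_support_dcycle cy yj.
rewrite (bigD1 T0) ?inE //= jT0 mulr1 (dcycle_value_eq cy dT0 jT0) big1 ?addr0 //.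
move=> T /andP []; rewrite inE => dT T_T0.
have [jT | _] := boolP (j \in T); last by rewrite mulr0.
by rewrite (dcycle_eq dT dT0 jT jT0) eqxx in T_T0.
Qed.

Definition dcycle_mx : 'M[algC]_(#|dcycles|, k) :=
  \matrix_(r, j) (j \in (enum_val r : {set 'I_k}))%:R.

Lemma enum_dcycle (r : 'I_#|dcycles|) : is_dcycle n (enum_val r).
Proof. by have := enum_valP r; rewrite inE. Qed.

Lemma dcycle_mx_row_free : row_free dcycle_mx.
Proof.
rewrite -kermx_eq0 -submx0; apply/row_subP => i; rewrite submx0.
set v := row i _; have vB : v *m dcycle_mx = 0 by rewrite -row_mul mulmx_ker row0.
clearbody v; apply/eqP/rowP => r; have [e eT] := dcycle_edge (enum_dcycle r).
have := congr1 (fun M : 'rV_k => M 0 e) vB; rewrite !mxE (bigD1 r) //= big1 ?addr0.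
  by rewrite mxE eT mulr1.
move=> r' r'_r; rewrite mxE.
have [eT' | _] := boolP (e \in enum_val r'); last by rewrite mulr0.
have := dcycle_eq (enum_dcycle r') (enum_dcycle r) eT' eT.
by move/enum_val_inj => r'E; rewrite r'E eqxx in r'_r.
Qed.

Section LeftKernel.
Variable xi : algC.
Hypothesis xi_prim : (k.+1).-primitive_root xi.

Lemma dcycle_mx_sub_kermx : (dcycle_mx <= kermx (Hmx n k xi))%MS.
Proof.
rewrite sub_kermx; apply/eqP/row_matrixP => r; rewrite row_mul row0.
have -> : row r dcycle_mx = \row_i (i \in (enum_val r : {set 'I_k}))%:R.
  by apply/rowP => i; rewrite !mxE.
exact/(Hmx_left_ker _ xi_prim)/dcycle_indicator_circulation/enum_dcycle.
Qed.

Lemma kermx_sub_dcycle_mx : (kermx (Hmx n k xi) <= dcycle_mx)%MS.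
Proof.
apply/row_subP => i; set u := row i _.
have cu : circulation (u 0).
  apply/(Hmx_left_ker _ xi_prim).
  have -> : \row_j u 0 j = u by apply/rowP => j; rewrite mxE.
  by rewrite -row_mul mulmx_ker row0.
apply/submxP; exists (\row_r dcycle_value (u 0) (enum_val r)); apply/rowP => j.
rewrite [RHS]mxE (circulation_decomposition j cu) big_enum_val.
by apply: eq_bigr => r _; rewrite !mxE.
Qed.

End LeftKernel.

End Graph.

Theorem theorem2p1 (k : nat) (n : int) (xi : algC) :
  (1 <= k)%N -> (k.+1).-primitive_root xi ->
  nullity (Hmx n k xi) = num_cycles n k.
Proof.
move=> _ xi_prim; rewrite /nullity -mxrank_ker.
have rank_cycles : \rank (dcycle_mx n k) = num_cycles n k := eqP (dcycle_mx_row_free n k).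
rewrite -rank_cycles; apply/eqP; rewrite eqn_leq.
by rewrite !mxrankS ?dcycle_mx_sub_kermx ?kermx_sub_dcycle_mx.
Qed.
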